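(* Let $P$ be a graded poset and $\sim$ a Reiner–Stamate equivalence relation on $\operatorname{Int}(P)$. Then the projection functor $\pi:P\to P/\sim$, $a\mapsto[a]$, $f\mapsto[f]$, is an almost discrete fibration such that every morphism of $P/\sim$ has a lift in $P$.
   Context: A graded poset has a rank function $\rho$ with $\rho(b)=\rho(a)+1$ when $b$ covers $a$; it is regarded as a category with a unique morphism $a\to b$ iff $a\le b$. $\operatorname{Int}(P)$ is the set of closed intervals $[a,b]$, $a\le b$, identified with the morphisms $a\le b$. An equivalence relation $\sim$ on $\operatorname{Int}(P)$ is Reiner–Stamate if: (A1) $[a,b]\sim[a',b']$ and $[b,c]\sim[b',c']$ imply $[a,c]\sim[a',c']$; (A2) with $\mathrm{int}_{[a,b]}:[a,b]\to(\operatorname{Int}(P)/\sim)^2$, $c\mapsto(\widetilde{[a,c]},\widetilde{[c,b]})$, whenever $[a,b]\sim[a',b']$ there is a unique map $\tau:[a,b]\to[a',b']$ with $\mathrm{int}_{[a',b']}\circ\tau=\mathrm{int}_{[a,b]}$; (A4) writing $x\sim y$ for $[x,x]\sim[y,y]$, if $a\le b_1$, $b_2\le c$, $b_1\sim b_2$, there exist $a'\le b'\le c'$ with $[a,b_1]\sim[a',b']$ and $[b_2,c]\sim[b',c']$. The quotient category $P/\sim$ has objects the classes $[a]$ of elements of $P$ under $x\sim y$, morphisms the classes $[a\le b]$ of intervals, and composition $[b_2\le c]\circ[a\le b_1]=[a'\le c']$ for $a'\le b'\le c'$ as in (A4); it is an indiscretely based category. A factorization $q=g_0\circ\cdots\circ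 g_{n+1}$ ($n\ge0$) is nontrivial if no $g_i$ is an isomorphism. A functor $F:\mathcal C\to\mathcal D$ is an almost discrete fibration if for every morphism $q$ of $\mathcal D$, every $p$ with $F(p)=q$ and every nontrivial factorization $q=g_0\circ\cdots\circ g_{n+1}$ there is a nontrivial factorization $p=f_0\circ\cdots\circ f_{n+1}$ with $F(f_i)=g_i$, unique up to $(f_i)\sim(f'_i)$ iff there are isomorphisms $h_0,\dots,h_n$ with $f'_0=f_0\circ h_0$, $f'_i=h_{i-1}^{-1}\circ f_i\circ h_i$ ($1\le i\le n$), $f'_{n+1}=h_n^{-1}\circ f_{n+1}$. *)

From Stdlib Require Import Arith.

Set Implicit Arguments.

Definition partial_order {P : Type} (le : P -> P -> Prop) : Prop :=
  (forall a, le a a) /\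
  (forall a b, le a b -> le b a -> a = b) /\
  (forall a b c, le a b -> le b c -> le a c).

Definition covers {P : Type} (le : P -> P -> Prop) (a b : P) : Prop :=
  le a b /\ a <> b /\ (forall c, le a c -> le c b -> c = a \/ c = b).

Definition graded {P : Type} (le : P -> P -> Prop) : Prop :=
  exists rho : P -> nat, forall a b, covers le a b -> rho b = S (rho a).

Definition in_int {P : Type} (le : P -> P -> Prop) (a b c : P) : Prop :=
  le a c /\ le c b.

(* ---------- Equivalence relations on Int(P) ----------
   An interval [a,b] (a <= b) is the pair (a,b); the relation
   R a b a' b' means [a,b] ~ [a',b']. *)

Definition int_equivalence {P : Type} (le : P -> P -> Prop)
    (R : P -> P -> P -> P -> Prop) : Prop :=
  (forall a b a' b', R a b a' b' -> le a b /\ le a' b') /\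
  (forall a b, le a b -> R a b a b) /\
  (forall a b a' b', R a b a' b' -> R a' b' a b) /\
  (forall a b a' b' a'' b'', R a b a' b' -> R a' b' a'' b'' -> R a b a'' b'').

Definition pt_equiv {P : Type} (R : P -> P -> P -> P -> Prop) (x y : P) : Prop :=
  R x x y y.

Definition axiom_A1 {P : Type} (R : P -> P -> P -> P -> Prop) : Prop :=
  forall a b c a' b' c', R a b a' b' -> R b c b' c' -> R a c a' c'.

(* int_[a,b](c) = ([a,c]~, [c,b]~); a map tau : [a,b] -> [a',b'] is a function
   defined on [a,b] with values in [a',b'] (two such maps are equal iff they
   agree on [a,b]). *)
Definition int_compatible {P : Type} (le : P -> P -> Prop)
    (R : P -> P -> P -> P -> Prop) (a b a' b' : P) (tau : P -> P) : Prop :=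
  forall c, in_int le a b c ->
    in_int le a' b' (tau c) /\ R a c a' (tau c) /\ R c b (tau c) b'.

Definition axiom_A2 {P : Type} (le : P -> P -> Prop)
    (R : P -> P -> P -> P -> Prop) : Prop :=
  forall a b a' b', R a b a' b' ->
    (exists tau, int_compatible le R a b a' b' tau) /\
    (forall tau1 tau2, int_compatible le R a b a' b' tau1 ->
       int_compatible le R a b a' b' tau2 ->
       forall c, in_int le a b c -> tau1 c = tau2 c).

Definition axiom_A4 {P : Type} (le : P -> P -> Prop)
    (R : P -> P -> P -> P -> Prop) : Prop :=
  forall a b1 b2 c, le a b1 -> le b2 c -> pt_equiv R b1 b2 ->
    exists a' b' c', le a' b' /\ le b' c' /\ R a b1 a' b' /\ R b2 c b' c'.

Definition reiner_stamate {P : Type} (le : P -> P -> Prop)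
    (R : P -> P -> P -> P -> Prop) : Prop :=
  int_equivalence le R /\ axiom_A1 R /\ axiom_A2 le R /\ axiom_A4 le R.

(* ---------- The category P (thin) ----------
   A morphism x -> y is a pair (x,y) with le x y.  Composition g o f
   is defined iff cod f = dom g and is then (dom f, cod g). *)

Definition is_mor {P : Type} (le : P -> P -> Prop) (f : P * P) : Prop :=
  le (fst f) (snd f).

Definition pcomp_eq {P : Type} (g f h : P * P) : Prop :=
  snd f = fst g /\ h = (fst f, snd g).

Definition pinv {P : Type} (h : P * P) : P * P := (snd h, fst h).

(* f : x -> y is an isomorphism in P iff there is a morphism y -> x
   (the two composites are then automatically identities, P being thin). *)
Definition piso {P : Type} (le : P -> P -> Prop) (f : P * P) : Prop :=
  le (snd f) (fst f).

Definition p_nontriv_fact {P : Type} (le : P -> P -> Prop)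
    (p : P * P) (n : nat) (f : nat -> P * P) : Prop :=
  (forall i, i <= S n -> is_mor le (f i) /\ ~ piso le (f i)) /\
  (forall i, i <= n -> snd (f (S i)) = fst (f i)) /\
  fst (f (S n)) = fst p /\ snd (f 0) = snd p.

Definition p_fact_equiv {P : Type} (le : P -> P -> Prop)
    (n : nat) (f f' : nat -> P * P) : Prop :=
  exists h : nat -> P * P,
    (forall i, i <= n -> is_mor le (h i) /\ piso le (h i)) /\
    pcomp_eq (f 0) (h 0) (f' 0) /\
    (forall i, 1 <= i -> i <= n ->
       exists m, pcomp_eq (f i) (h i) m /\ pcomp_eq (pinv (h (i - 1))) m (f' i)) /\
    pcomp_eq (pinv (h n)) (f (S n)) (f' (S n)).

(* ---------- The quotient category P/~ ----------
   A morphism of P/~ is represented by an interval (a,b); two representatives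
   denote the same morphism iff they are ~-related.  Objects are classes [x]
   under pt_equiv; [a <= b] : [a] -> [b]. *)

Definition qeq {P : Type} (R : P -> P -> P -> P -> Prop) (f g : P * P) : Prop :=
  R (fst f) (snd f) (fst g) (snd g).

(* h represents the composite [b2 <= c] o [a <= b1], defined when b1 ~ b2,
   as [a' <= c'] for a' <= b' <= c' as in (A4). *)
Definition qcomp {P : Type} (le : P -> P -> Prop) (R : P -> P -> P -> P -> Prop)
    (g f h : P * P) : Prop :=
  pt_equiv R (snd f) (fst g) /\
  exists a' b' c', le a' b' /\ le b' c' /\
    R (fst f) (snd f) a' b' /\ R (fst g) (snd g) b' c' /\ qeq R (a', c') h.

Definition qid {P : Type} (x : P) : P * P := (x, x).

Definition qiso {P : Type} (le : P -> P -> Prop) (R : P -> P -> P -> P -> Prop)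
    (g : P * P) : Prop :=
  exists g', is_mor le g' /\
    qcomp le R g' g (qid (fst g)) /\ qcomp le R g g' (qid (snd g)).

(* qcomposite g k j h : h represents g_j o g_{j+1} o ... o g_{j+k} *)
Fixpoint qcomposite {P : Type} (le : P -> P -> Prop) (R : P -> P -> P -> P -> Prop)
    (g : nat -> P * P) (k j : nat) (h : P * P) : Prop :=
  match k with
  | 0 => qeq R (g j) h
  | S k' => exists h', qcomposite le R g k' (S j) h' /\ qcomp le R (g j) h' h
  end.

Definition q_nontriv_fact {P : Type} (le : P -> P -> Prop)
    (R : P -> P -> P -> P -> Prop) (q : P * P) (n : nat) (g : nat -> P * P) : Prop :=
  (forall i, i <= S n -> is_mor le (g i) /\ ~ qiso le R (g i)) /\
  qcomposite le R g (S n) 0 q.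

(* ---------- The projection functor pi : P -> P/~ ----------
   pi(a) = [a], pi(a <= b) = [a <= b]; so pi(f) = g iff qeq R f g. *)

Definition proj_is_functor {P : Type} (le : P -> P -> Prop)
    (R : P -> P -> P -> P -> Prop) : Prop :=
  (forall a, qeq R (qid a) (qid a)) /\
  (forall f g h, is_mor le f -> is_mor le g -> pcomp_eq g f h ->
     qcomp le R g f h).

Definition proj_almost_discrete_fibration {P : Type} (le : P -> P -> Prop)
    (R : P -> P -> P -> P -> Prop) : Prop :=
  forall (q p : P * P) (n : nat) (g : nat -> P * P),
    is_mor le q -> is_mor le p -> qeq R p q ->
    q_nontriv_fact le R q n g ->
    (exists f : nat -> P * P,
       p_nontriv_fact le p n f /\ (forall i, i <= S n -> qeq R (f i) (g i))) /\
    (forall f f' : nat -> P * P,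
       p_nontriv_fact le p n f -> (forall i, i <= S n -> qeq R (f i) (g i)) ->
       p_nontriv_fact le p n f' -> (forall i, i <= S n -> qeq R (f' i) (g i)) ->
       p_fact_equiv le n f f').

Definition proj_has_lifts {P : Type} (le : P -> P -> Prop)
    (R : P -> P -> P -> P -> Prop) : Prop :=
  forall q : P * P, is_mor le q -> exists p, is_mor le p /\ qeq R p q.

From Stdlib Require Import Arith Lia ClassicalEpsilon.

(** By (A2), a point [b] of an interval [[a,c]] is transported to a point
    [b'] of any equivalent interval [[a',c']] with [[a,b] ~ [a',b']] and
    [[b,c] ~ [b',c']], and the uniqueness part of (A2) makes [b'] unique.
    Transporting the splitting points of a factorization of [[p]] from the
    top down yields a lift of the factorization, and (A1) shows that the
    composite of any lift of [g_1 ... g_(n+1)] represents their composite in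
    [P/~]; hence the splitting points of two lifts agree one by one, so lifts
    are unique (up to identities).  A lift of a non-isomorphism is not an
    identity, because [[x,x] ~ [u,v]] makes [[u <= v]] invertible in [P/~]. *)

Section Projection.

Variables (P : Type) (le : P -> P -> Prop) (R : P -> P -> P -> P -> Prop).

Hypothesis le_refl : forall a, le a a.
Hypothesis le_antisym : forall {a b}, le a b -> le b a -> a = b.
Hypothesis le_trans : forall {a b c}, le a b -> le b c -> le a c.

Hypothesis R_le : forall {a b a' b'}, R a b a' b' -> le a b /\ le a' b'.
Hypothesis R_refl : forall {a b}, le a b -> R a b a b.
Hypothesis R_sym : forall {a b a' b'}, R a b a' b' -> R a' b' a b.
Hypothesis R_trans : forall {a b a' b' a'' b''},
  R a b a' b' -> R a' b' a'' b'' -> R a b a'' b''.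
Hypothesis R_A1 : forall {a b c a' b' c'},
  R a b a' b' -> R b c b' c' -> R a c a' c'.
Hypothesis R_A2 : axiom_A2 le R.

Lemma split_transport {a b c a' c'} :
  R a c a' c' -> le a b -> le b c ->
  exists b', le a' b' /\ le b' c' /\ R a b a' b' /\ R b c b' c'.
Proof.
  intros Hac Hab Hbc.
  destruct (R_A2 _ _ _ _ Hac) as [[tau Htau] _].
  destruct (Htau b) as [[Ha'b Hbc'] [Hab' Hb'c]]; [split; assumption|].
  exists (tau b); auto.
Qed.

Lemma int_point_rigid {a b c c'} : R a c a c' -> R c b c' b -> c = c'.
Proof.
  intros Hc Hc'.
  destruct (R_le Hc) as [Hac Hac']; destruct (R_le Hc') as [Hcb Hc'b].
  destruct (R_A2 _ _ _ _ (R_A1 Hc Hc')) as [_ tau_unique].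
  pose (swap x := if excluded_middle_informative (x = c) then c' else x).
  assert (id_compat : int_compatible le R a b a b (fun x => x)).
  { intros x [Hax Hxb]; repeat split; auto. }
  assert (swap_compat : int_compatible le R a b a b swap).
  { intros x [Hax Hxb]; unfold swap.
    destruct (excluded_middle_informative (x = c)) as [->|_]; repeat split; auto. }
  specialize (tau_unique _ _ id_compat swap_compat c (conj Hac Hcb)).
  unfold swap in tau_unique.
  destruct (excluded_middle_informative (c = c)); congruence.
Qed.

Definition lifts_chain (g f : nat -> P * P) (j k : nat) : Prop :=
  (forall i, j <= i <= j + k -> is_mor le (f i) /\ qeq R (f i) (g i)) /\
  (forall i, j <= i < j + k -> snd (f (S i)) = fst (f i)).

Lemma lifts_chain_tail {g f j k} :
  lifts_chain g f j (S k) -> lifts_chain g f (S j) k.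
Proof. intros [Hf Hlink]; split; intros i Hi; [apply Hf | apply Hlink]; lia. Qed.

Lemma lifts_chain_composite {g f k j h} :
  qcomposite le R g k j h -> lifts_chain g f j k ->
  R (fst (f (j + k))) (snd (f j)) (fst h) (snd h).
Proof.
  induction k as [|k IH] in j, h |- *; intros Hh Hf; simpl in Hh.
  - rewrite Nat.add_0_r.
    destruct Hf as [Hf _]; destruct (Hf j) as [_ Hj]; [lia|].
    exact (R_trans Hj Hh).
  - destruct Hh as (h' & Hh' & _ & a' & b' & c' & _ & _ & Hh'ab & Hgbc & Hac).
    pose proof (IH _ _ Hh' (lifts_chain_tail Hf)) as Htail; simpl in Htail.
    destruct Hf as [Hf Hlink]; rewrite Hlink in Htail by lia.
    destruct (Hf j) as [_ Hj]; [lia|].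
    rewrite Nat.add_succ_r.
    exact (R_trans (R_A1 (R_trans Htail Hh'ab) (R_trans Hj Hgbc)) Hac).
Qed.

Lemma lifts_chain_exists {g k j h p1 p2} :
  qcomposite le R g k j h -> R p1 p2 (fst h) (snd h) ->
  exists f, lifts_chain g f j k /\ fst (f (j + k)) = p1 /\ snd (f j) = p2.
Proof.
  induction k as [|k IH] in j, h, p1, p2 |- *; intros Hh Hp; simpl in Hh.
  - exists (fun _ => (p1, p2)).
    split; [split|split; reflexivity].
    + intros i Hi; replace i with j by lia.
      split; [exact (proj1 (R_le Hp)) | exact (R_trans Hp (R_sym Hh))].
    + intros i Hi; lia.
  - destruct Hh as (h' & Hh' & _ & a' & b' & c' & Ha'b' & Hb'c' & Hh'ab & Hgbc & Hac).
    destruct (split_transport (R_trans Hac (R_sym Hp)) Ha'b' Hb'c')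
      as (m & _ & _ & Ha'm & Hb'm).
    destruct (IH (S j) h' p1 m Hh' (R_sym (R_trans Hh'ab Ha'm)))
      as (f & [Hf Hlink] & Htop & Hbot).
    exists (fun i => if Nat.eqb i j then (m, p2) else f i).
    split; [split|split].
    + intros i Hi; destruct (Nat.eqb_spec i j) as [->|Hij].
      * split; [exact (proj2 (R_le Hb'm)) | exact (R_sym (R_trans Hgbc Hb'm))].
      * apply Hf; lia.
    + intros i Hi; destruct (Nat.eqb_spec (S i) j) as [|_]; [lia|].
      destruct (Nat.eqb_spec i j) as [->|Hij]; [exact Hbot | apply Hlink; lia].
    + destruct (Nat.eqb_spec (j + S k) j) as [|_]; [lia|].
      rewrite Nat.add_succ_r; exact Htop.
    + rewrite Nat.eqb_refl; reflexivity.
Qed.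

Lemma lifts_chain_unique {g k j h f f'} :
  qcomposite le R g k j h -> lifts_chain g f j k -> lifts_chain g f' j k ->
  fst (f (j + k)) = fst (f' (j + k)) -> snd (f j) = snd (f' j) ->
  forall i, j <= i <= j + k -> f i = f' i.
Proof.
  induction k as [|k IH] in j, h, f, f' |- *; intros Hh Hf Hf' Htop Hbot i Hi.
  - replace i with j by lia; rewrite Nat.add_0_r in Htop.
    rewrite (surjective_pairing (f j)), (surjective_pairing (f' j)); congruence.
  - simpl in Hh; destruct Hh as (h' & Hh' & _).
    rewrite Nat.add_succ_r in Htop.
    assert (Hj : f j = f' j).
    { pose proof (lifts_chain_composite Hh' (lifts_chain_tail Hf)) as Hc.
      pose proof (lifts_chain_composite Hh' (lifts_chain_tail Hf')) as Hc'.
      simpl in Hc, Hc'; rewrite Htop in Hc.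
      destruct Hf as [Hf Hlink], Hf' as [Hf' Hlink'].
      rewrite Hlink in Hc by lia; rewrite Hlink' in Hc' by lia.
      destruct (Hf j) as [_ Hgj]; [lia|]; destruct (Hf' j) as [_ Hgj']; [lia|].
      unfold qeq in Hgj; rewrite Hbot in Hgj.
      assert (Hm : fst (f j) = fst (f' j))
        by exact (int_point_rigid (R_trans Hc (R_sym Hc')) (R_trans Hgj (R_sym Hgj'))).
      rewrite (surjective_pairing (f j)), (surjective_pairing (f' j)); congruence. }
    destruct (Nat.eq_dec i j) as [->|Hij]; [exact Hj|].
    apply (IH (S j) h' f f' Hh' (lifts_chain_tail Hf) (lifts_chain_tail Hf'));
      [exact Htop| |lia].
    destruct Hf as [_ Hlink], Hf' as [_ Hlink'].
    rewrite Hlink, Hlink' by lia; congruence.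
Qed.

Lemma qiso_of_R_point {x u v} : R x x u v -> qiso le R (u, v).
Proof.
  intros Hx; destruct (R_le Hx) as [_ Huv].
  destruct (split_transport (R_sym Hx) (le_refl u) Huv) as (y & Hxy & Hyx & Hu & _).
  destruct (split_transport (R_sym Hx) Huv (le_refl v)) as (z & Hxz & Hzx & _ & Hv).
  rewrite (le_antisym Hyx Hxy) in Hu; rewrite (le_antisym Hzx Hxz) in Hv.
  assert (Hxx : R x x x x) by exact (R_refl (le_refl x)).
  exists (x, x); split; [exact (le_refl x)|split].
  - split; [exact Hv|].
    exists x, x, x; repeat split; try apply le_refl;
      [exact (R_sym Hx) | exact Hxx | exact (R_sym Hu)].
  - split; [exact (R_sym Hu)|].
    exists x, x, x; repeat split; try apply le_refl;
      [exact Hxx | exact (R_sym Hx) | exact (R_sym Hv)].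
Qed.

Lemma not_piso_of_lift {f g} : qeq R f g -> ~ qiso le R g -> ~ piso le f.
Proof.
  intros Hfg Hg Hf; apply Hg.
  destruct (R_le Hfg) as [Hmor _].
  unfold qeq in Hfg; rewrite (le_antisym Hmor Hf) in Hfg.
  rewrite (surjective_pairing g); exact (qiso_of_R_point Hfg).
Qed.

Lemma p_nontriv_fact_lifts_chain {p n f g} :
  p_nontriv_fact le p n f -> (forall i, i <= S n -> qeq R (f i) (g i)) ->
  lifts_chain g f 0 (S n).
Proof.
  intros [Hf [Hlink _]] Hfg.
  split; intros i Hi; [split; [apply Hf | apply Hfg] | apply Hlink]; lia.
Qed.

Lemma p_fact_equiv_of_eq {n f f'} :
  (forall i, i <= n -> snd (f (S i)) = fst (f i)) ->
  (forall i, i <= S n -> f i = f' i) -> p_fact_equiv le n f f'.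
Proof.
  intros Hlink Heq.
  exists (fun i => (fst (f i), fst (f i))); split; [|split; [|split]].
  - intros i _; split; apply le_refl.
  - split; simpl; [reflexivity|].
    rewrite <- Heq by lia; apply surjective_pairing.
  - intros [|i] Hi Hin; [lia|]; rewrite Nat.sub_succ, Nat.sub_0_r.
    exists (f (S i)); split; split; simpl; try reflexivity.
    + apply surjective_pairing.
    + apply Hlink; lia.
    + rewrite <- Heq, <- (Hlink i) by lia; apply surjective_pairing.
  - split; simpl; [apply Hlink; lia|].
    rewrite <- Heq, <- (Hlink n) by lia; apply surjective_pairing.
Qed.

Lemma lift_nontriv_fact_exists {p q n g} :
  qeq R p q -> q_nontriv_fact le R q n g ->
  exists f, p_nontriv_fact le p n f /\ (forall i, i <= S n -> qeq R (f i) (g i)).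
Proof.
  intros Hpq [Hg Hcomp].
  destruct (lifts_chain_exists Hcomp Hpq) as (f & [Hf Hlink] & Htop & Hbot).
  assert (Hfg : forall i, i <= S n -> qeq R (f i) (g i)) by (intros i Hi; apply Hf; lia).
  exists f; split; [|exact Hfg].
  split; [|split; [|split]]; [| intros i Hi; apply Hlink; lia | exact Htop | exact Hbot].
  intros i Hi; split; [apply Hf; lia|].
  exact (not_piso_of_lift (Hfg i Hi) (proj2 (Hg i Hi))).
Qed.

Lemma lift_nontriv_fact_unique {p q n g f f'} :
  q_nontriv_fact le R q n g ->
  p_nontriv_fact le p n f -> (forall i, i <= S n -> qeq R (f i) (g i)) ->
  p_nontriv_fact le p n f' -> (forall i, i <= S n -> qeq R (f' i) (g i)) ->
  p_fact_equiv le n f f'.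
Proof.
  intros [_ Hcomp] Hf Hfg Hf' Hf'g.
  apply p_fact_equiv_of_eq; [exact (proj1 (proj2 Hf))|].
  intros i Hi.
  apply (lifts_chain_unique Hcomp (p_nontriv_fact_lifts_chain Hf Hfg)
           (p_nontriv_fact_lifts_chain Hf' Hf'g)); [| |lia].
  - destruct Hf as (_ & _ & Htop & _), Hf' as (_ & _ & Htop' & _); simpl; congruence.
  - destruct Hf as (_ & _ & _ & Hbot), Hf' as (_ & _ & _ & Hbot'); congruence.
Qed.

Lemma proj_functor : proj_is_functor le R.
Proof.
  split.
  - intros a; exact (R_refl (le_refl a)).
  - intros [x y] [y' z] [x' z'] Hxy Hyz [Hy Hxz]; simpl in *.
    subst y'; injection Hxz as -> ->.
    split; [exact (R_refl (le_refl y))|].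
    exists x, y, z; repeat split; auto.
    exact (R_refl (le_trans Hxy Hyz)).
Qed.

Lemma proj_almost_discrete : proj_almost_discrete_fibration le R.
Proof.
  intros q p n g _ _ Hpq Hg; split.
  - exact (lift_nontriv_fact_exists Hpq Hg).
  - intros f f'; exact (lift_nontriv_fact_unique Hg).
Qed.

Lemma proj_lifts : proj_has_lifts le R.
Proof. intros q Hq; exists q; split; [exact Hq | exact (R_refl Hq)]. Qed.

End Projection.

Theorem proposition3p7 (P : Type) (le : P -> P -> Prop)
    (R : P -> P -> P -> P -> Prop) :
  partial_order le -> graded le -> reiner_stamate le R ->
  proj_is_functor le R /\ proj_almost_discrete_fibration le R /\
  proj_has_lifts le R.
Proof.
  intros [le_refl [le_antisym le_trans]] _
         [[R_le [R_refl [R_sym R_trans]]] [R_A1 [R_A2 _]]].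
  split; [|split].
  - eapply proj_functor; eassumption.
  - eapply proj_almost_discrete; eassumption.
  - eapply proj_lifts; eassumption.
Qed.
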